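(* Let $G$ be a graph and let $v_1,\dots,v_6$ be pairwise distinct vertices of $G$ such that $v_2v_3,v_4v_5,v_6v_1$ are edges and $v_1v_2,v_3v_4,v_5v_6$ are non-edges of $G$ (an $AP_6$). Assume that no two of the edges $v_2v_3,v_4v_5,v_6v_1$ are in conflict. Then $v_3v_6,v_4v_1,v_5v_2$ are edges of $G$, and $v_4v_5$ is in conflict with $v_3v_6$, $v_2v_3$ is in conflict with $v_4v_1$, and $v_6v_1$ is in conflict with $v_5v_2$.
   Context: Two edges $e,e'$ of a graph are in conflict if there are vertices $w_1,w_2,w_3,w_4$ (not necessarily distinct) with $e=w_2w_3$, $e'=w_4w_1$ and $w_1w_2$, $w_3w_4$ non-edges (i.e. the four vertices build an alternating cycle $AC_4$). *)

(* A graph on vertex type T is a symmetric irreflexive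
   boolean relation e : rel T (finiteness is not needed for this statement). *)
From mathcomp Require Import all_boot.
Set Implicit Arguments. Unset Strict Implicit. Unset Printing Implicit Defensive.

Definition simple_graph (T : Type) (e : rel T) : Prop :=
  (forall x y, e x y = e y x) /\ (forall x, ~~ e x x).

Definition same_pair (T : Type) (a b x y : T) : Prop :=
  (a = x /\ b = y) \/ (a = y /\ b = x).

(* The (unordered) edges ab and cd are in conflict: there are vertices
   w1 w2 w3 w4 (not necessarily distinct) with ab = w2w3, cd = w4w1, and
   w1w2, w3w4 non-edges (an alternating cycle AC_4). *)
Definition in_conflict (T : Type) (e : rel T) (a b c d : T) : Prop :=
  e a b /\ e c d /\
  exists w1 w2 w3 w4 : T,
    same_pair a b w2 w3 /\ same_pair c d w4 w1 /\
    ~~ e w1 w2 /\ ~~ e w3 w4.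

From mathcomp Require Import all_boot.

(* If the edges ab and cd are joined by the non-edge bc, then da must be an
   edge, for otherwise a, b, c, d would form an alternating 4-cycle.  Applied
   to the three consecutive pairs of edges of the AP_6 this yields the chords
   v5v2, v1v4, v3v6; each chord, together with two non-edges of the AP_6,
   closes a new alternating 4-cycle. *)

Set Implicit Arguments.
Unset Strict Implicit.
Unset Printing Implicit Defensive.

Section Conflicts.

Variables (T : Type) (e : rel T).

Lemma in_conflict_of_nonedges (a b c d : T) :
  e a b -> e c d -> ~~ e d a -> ~~ e b c -> in_conflict e a b c d.
Proof.
move=> eab ecd nda nbc; split=> //; split=> //.
by exists d, a, b, c; split; [left | split; [left | split]].
Qed.

Lemma edge_of_no_conflict (a b c d : T) :
  e a b -> e c d -> ~~ e b c -> ~ in_conflict e a b c d -> e d a.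
Proof.
move=> eab ecd nbc nconf; apply/negPn/negP => nda.
exact/nconf/in_conflict_of_nonedges.
Qed.

Hypothesis e_sym : symmetric e.

Lemma in_conflict_swapr (a b c d : T) :
  in_conflict e a b c d -> in_conflict e a b d c.
Proof.
case=> eab [ecd [w1 [w2 [w3 [w4 [p_ab [p_cd nonedges]]]]]]].
split=> //; split; first by rewrite e_sym.
exists w1, w2, w3, w4; split=> //; split=> //.
by case: p_cd => [[-> ->] | [-> ->]]; [right | left].
Qed.

End Conflicts.

Theorem lemma2 (T : Type) (e : rel T) (v1 v2 v3 v4 v5 v6 : T) :
  simple_graph e ->
  [/\ v1 <> v2, v1 <> v3, v1 <> v4, v1 <> v5 & v1 <> v6] ->
  [/\ v2 <> v3, v2 <> v4, v2 <> v5 & v2 <> v6] ->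
  [/\ v3 <> v4, v3 <> v5 & v3 <> v6] ->
  v4 <> v5 -> v4 <> v6 -> v5 <> v6 ->
  e v2 v3 -> e v4 v5 -> e v6 v1 ->
  ~~ e v1 v2 -> ~~ e v3 v4 -> ~~ e v5 v6 ->
  ~ in_conflict e v2 v3 v4 v5 ->
  ~ in_conflict e v4 v5 v6 v1 ->
  ~ in_conflict e v6 v1 v2 v3 ->
  [/\ e v3 v6, e v4 v1 & e v5 v2] /\
  [/\ in_conflict e v4 v5 v3 v6,
      in_conflict e v2 v3 v4 v1 &
      in_conflict e v6 v1 v5 v2].
Proof.
move=> [e_sym _] _ _ _ _ _ _ e23 e45 e61 n12 n34 n56 nc2345 nc4561 nc6123.
have e52 : e v5 v2 := edge_of_no_conflict e23 e45 n34 nc2345.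
have e41 : e v4 v1 by rewrite e_sym (edge_of_no_conflict e45 e61 n56 nc4561).
have e36 : e v3 v6 := edge_of_no_conflict e61 e23 n12 nc6123.
split; first by [].
split.
- by apply: in_conflict_swapr => //; apply: in_conflict_of_nonedges;
    rewrite // e_sym.
- exact: in_conflict_of_nonedges.
- by apply: in_conflict_swapr => //; apply: in_conflict_of_nonedges;
    rewrite // e_sym.
Qed.
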